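(* Let $p\ge 5$ be a prime and $k$ an integer with $1\le k\le \frac{p-3}{2}$, and put $t=p-1-2k$. Then, modulo $p$, \begin{align*} (-1)^k 4^{2k-1} E_t \equiv{}& 32^t S_t(0, \tfrac{1}{128}) + 6^t S_t(\tfrac{1}{8}, \tfrac{7}{48}) + 6^t S_t(\tfrac{3}{16}, \tfrac{5}{24}) + (2^t + 4^t) S_t(\tfrac{7}{16}, \tfrac{11}{24})\\ &+ (2^t + 4^t + 6^t) S_t(\tfrac{11}{24}, \tfrac{15}{32}) + (2^t + 4^t + 6^t + 8^t) S_t(\tfrac{15}{32}, \tfrac{23}{48}) + (2^t + 4^t + 8^t) S_t(\tfrac{23}{48}, \tfrac{31}{64})\\ &+ (2^t + 4^t + 8^t + 16^t) S_t(\tfrac{31}{64}, \tfrac{63}{128}) + (2^t + 4^t + 8^t + 16^t + 32^t) S_t(\tfrac{63}{128}, \tfrac{1}{2}). \end{align*}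
   Context: $E_n$ denotes the $n$th Euler number, defined by $\sec z=\sum_{n\ge0}E_n\frac{z^n}{n!}$ (so $E_2=1$, $E_4=5$). For a prime $p$, an integer $\ell$ and real numbers $0\le x<y\le 1$, $S_\ell(x,y)=\sum_{xp<s<yp} s^\ell$, the sum over integers $s$ strictly between $xp$ and $yp$. Congruences between rational numbers modulo $p$ mean that the difference has $p$-adic valuation at least $1$. *)

From HB Require Import structures.
From mathcomp Require Import all_boot all_order all_algebra.
Set Implicit Arguments. Unset Strict Implicit. Unset Printing Implicit Defensive.
Import Order.TTheory GRing.Theory Num.Theory.
Local Open Scope ring_scope.

(* Euler numbers E_n with sec z = sum_n E_n z^n / n!.
   As formal power series, sec * cos = 1, i.e. E_0 = 1, E_n = 0 for n odd, and
   for even n >= 2:  sum_{j even, j <= n} C(n,j) (-1)^((n-j)/2) E_j = 0.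
   eseq n = [:: E_0; ...; E_n]. *)
Definition euler_next (n : nat) (s : seq int) : int :=
  if odd n then 0
  else - \sum_(0 <= j < n | ~~ odd j)
           ('C(n, j))%:Z * (-1) ^+ ((n - j)./2) * nth 0 s j.

Fixpoint eseq (n : nat) : seq int :=
  match n with
  | 0 => [:: 1]
  | m.+1 => rcons (eseq m) (euler_next m.+1 (eseq m))
  end.

Definition euler (n : nat) : int := nth 0 (eseq n) n.

(* S_l(x,y) = sum of s^l over integers s with x p < s < y p (for 0 <= x < y <= 1,
   all such s lie in [0, p]). *)
Definition Ssum (p l : nat) (x y : rat) : int :=
  \sum_(0 <= s < p.+1 | (x * p%:R < s%:R) && (s%:R < y * p%:R)) (s%:Z) ^+ l.

(* The sequence (-1)^(n/2) h(n), where
   h(n) = sum_(m < p) (-1)^m (2m+1)^n, satisfies the recurrence defining the Euler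
   numbers: its even binomial transform telescopes, since for even n > 0 one has
   ((2m+1)+1)^n + (1-(2m+1))^n = (2m+2)^n + (2m)^n and (2p)^n = 0.  Hence
   E_n = (-1)^(n/2) h(n).  Reducing 2m+1 modulo p folds h(t) onto the even residues
   2j, j <= (p-1)/2; as t is even and the power sums of 1, ..., (p-1)/2 vanish for
   0 < t < p-1, the alternating sum over j is twice the sum over the even j = 2u,
   u < p/4.  This gives h(t) = (-1)^((p-1)/2) 4^(t+1) S_t(0,1/4), and by Fermat the
   left-hand side of the congruence is S_t(0,1/4).
   On the right-hand side each c^t S_t(x,y) is, t being even, the sum of u^t over
   the integers u = |mp - cs| with xp < s < yp, for a suitable m.  These 24 sets
   partition (0,p/4): sorted by the 2-adic valuation of u, each one is an interval
   of a residue class, and the odd u in (p/8,p/4) are sorted modulo 6, which needs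
   p coprime to 6. *)

From mathcomp Require Import all_boot all_order all_algebra.
From mathcomp Require Import zify.
From mathcomp Require Import finfield.
Set Implicit Arguments.
Unset Strict Implicit.
Unset Printing Implicit Defensive.
Import GRing.Theory Num.Theory.
Local Open Scope ring_scope.

Lemma exprN_even (R : pzRingType) (x : R) n : ~~ odd n -> (- x) ^+ n = x ^+ n.
Proof. by move=> /negbTE n_even; rewrite exprNn -signr_odd n_even mul1r. Qed.

Lemma big_nat_bij (R : nmodType) (m n m' n' : nat) (P Q : pred nat)
    (h g : nat -> nat) (F : nat -> R) :
  (forall s, (m <= s < n)%N -> P s -> [/\ (m' <= h s < n')%N, Q (h s) & g (h s) = s]) ->
  (forall u, (m' <= u < n')%N -> Q u -> [/\ (m <= g u < n)%N, P (g u) & h (g u) = u]) ->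
  \sum_(m <= s < n | P s) F (h s) = \sum_(m' <= u < n' | Q u) F u.
Proof.
move=> hP gQ; rewrite -big_filter -[RHS]big_filter -(big_map h xpredT F).
apply/perm_big/uniq_perm; rewrite ?filter_uniq ?iota_uniq //.
  rewrite map_inj_in_uniq ?filter_uniq ?iota_uniq // => x y.
  rewrite !mem_filter !mem_index_iota => /andP[Px xmn] /andP[Py ymn] hxy.
  by have [_ _ <-] := hP x xmn Px; have [_ _ <-] := hP y ymn Py; rewrite hxy.
move=> u; rewrite mem_filter mem_index_iota; apply/mapP/andP.
  case=> s; rewrite mem_filter mem_index_iota => /andP[Ps smn] ->.
  by have [] := hP s smn Ps.
case=> Qu umn; have [gmn Pg hg] := gQ u umn Qu.
by exists (g u); rewrite // mem_filter mem_index_iota Pg.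
Qed.

Lemma size_eseq m : size (eseq m) = m.+1.
Proof. by elim: m => //= m IHm; rewrite size_rcons IHm. Qed.

Lemma nth_eseq m j : (j <= m)%N -> nth 0 (eseq m) j = euler j.
Proof.
elim: m j => [|m IHm] j; first by case: j.
rewrite leq_eqVlt => /orP[/eqP -> //|lt_jm].
by rewrite /= nth_rcons size_eseq lt_jm IHm.
Qed.

Lemma euler_rec n : ~~ odd n -> (0 < n)%N ->
  euler n = - \sum_(0 <= j < n | ~~ odd j)
                ('C(n, j))%:Z * (-1) ^+ ((n - j)./2) * euler j.
Proof.
case: n => [//|m] m_even _.
rewrite /euler /= nth_rcons size_eseq ltnn eqxx /euler_next (negbTE m_even).
congr (- _); rewrite [LHS]big_nat_cond [RHS]big_nat_cond.
by apply: eq_bigr => j /andP[/andP[_ lt_jm] _]; rewrite nth_eseq.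
Qed.

Lemma sum_even_binomial (R : comPzRingType) (a : R) n :
  2 * \sum_(0 <= j < n.+1 | ~~ odd j) 'C(n, j)%:R * a ^+ j = (a + 1) ^+ n + (- a + 1) ^+ n.
Proof.
rewrite !exprD1n -big_split /= !big_mkord [RHS](bigID (fun i : 'I__ => odd i)) /=.
rewrite [X in _ = X + _]big1 ?add0r => [|i i_odd]; last first.
  by rewrite exprNn -signr_odd i_odd expr1 mulN1r -mulrnDl subrr mul0rn.
rewrite mulr_sumr; apply: eq_bigr => i /negbTE i_even.
by rewrite exprNn -signr_odd i_even expr0 mul1r -mulr2n !mulr_natl.
Qed.

Section Characteristic.
Variables (R : nzRingType) (p : nat).
Hypothesis pcharRp : p \in [pchar R].

Lemma natr_eq_pchar a b : a = b %[mod p] -> a%:R = b%:R :> R.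
Proof. by move=> eq_ab; rewrite -(GRing.natr_mod_pchar pcharRp) eq_ab GRing.natr_mod_pchar. Qed.

Lemma natr_eq_opp_pchar a b : (p %| a + b)%N -> a%:R = - b%:R :> R.
Proof. by move=> p_dvd; apply/eqP; rewrite -subr_eq0 opprK -natrD -(dvdn_pcharf pcharRp). Qed.

End Characteristic.

Lemma sum_sign (R : pzRingType) n : \sum_(0 <= m < n) (-1) ^+ m = (odd n)%:R :> R.
Proof.
elim: n => [|n IHn]; first by rewrite big_geq.
rewrite big_nat_recr //= IHn -signr_odd; case: (odd n); rewrite ?expr1 ?expr0.
  by rewrite subrr.
by rewrite add0r.
Qed.

Lemma signr_odd_eq (R : pzRingType) a b : odd a = odd b -> (-1) ^+ a = (-1) ^+ b :> R.
Proof. by move=> odd_ab; rewrite -signr_odd odd_ab signr_odd. Qed.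

Section OddCharacteristic.
Variables (F : fieldType) (p : nat).
Hypotheses (pcharFp : p \in [pchar F]) (p_odd : odd p).

Lemma two_neq0 : (2%:R : F) != 0.
Proof.
rewrite -(dvdn_pcharf pcharFp); apply/negP => /(@dvdn_leq _ 2 isT).
by have := pcharf_prime pcharFp; case: p p_odd => [|[|[|]]].
Qed.

Definition alt_odd_powsum n : F := \sum_(0 <= m < p) (-1) ^+ m * (2 * m + 1)%:R ^+ n.

Lemma alt_odd_powsum0 : alt_odd_powsum 0 = 1.
Proof.
by rewrite /alt_odd_powsum; under eq_bigr do rewrite expr0 mulr1; rewrite sum_sign p_odd.
Qed.

Lemma alt_odd_powsum_binomial n : ~~ odd n -> (0 < n)%N ->
  \sum_(0 <= j < n.+1 | ~~ odd j) 'C(n, j)%:R * alt_odd_powsum j = 0.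
Proof.
move=> n_even n_gt0.
suff /eqP : 2%:R * \sum_(0 <= j < n.+1 | ~~ odd j) 'C(n, j)%:R * alt_odd_powsum j = 0.
  by rewrite mulf_eq0 (negbTE two_neq0) => /eqP.
rewrite /alt_odd_powsum; under eq_bigr do rewrite mulr_sumr.
rewrite exchange_big_nat /= mulr_sumr.
under eq_bigr => m _.
  rewrite (eq_bigr (fun j => (-1) ^+ m * ('C(n, j)%:R * (2 * m + 1)%:R ^+ j))).
    by rewrite -mulr_sumr mulrCA sum_even_binomial; over.
  by move=> j _; rewrite mulrCA.
pose f m : F := - ((-1) ^+ m * (2 * m)%:R ^+ n).
rewrite (eq_bigr (fun m => f m.+1 - f m)) => [|m _]; last first.
  have -> : ((2 * m + 1)%:R + 1 : F) = (2 * m.+1)%:R by rewrite natr1 addn1 mulnS add2n.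
  have -> : (- (2 * m + 1)%:R + 1 : F) = - (2 * m)%:R by rewrite natrD opprD addrNK.
  by rewrite /f exprS mulN1r mulNr !opprK mulrDr (exprN_even _ n_even).
by rewrite telescope_sumr // /f natrM (pcharf0 pcharFp) mulr0 muln0 !expr0n gtn_eqF // !mulr0 subrr.
Qed.

Lemma euler_alt_odd_powsum n : ~~ odd n -> (euler n)%:~R = (-1) ^+ n./2 * alt_odd_powsum n.
Proof.
elim/ltn_ind: n => -[|n] IHn n_even; first by rewrite alt_odd_powsum0 mulr1.
rewrite euler_rec // rmorphN rmorph_sum /=.
have -> : \sum_(0 <= j < n.+1 | ~~ odd j)
    (('C(n.+1, j))%:Z * (-1) ^+ ((n.+1 - j)./2) * euler j)%:~R
  = (-1) ^+ n.+1./2 * \sum_(0 <= j < n.+1 | ~~ odd j) 'C(n.+1, j)%:R * alt_odd_powsum j :> F.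
  rewrite mulr_sumr big_nat_cond [RHS]big_nat_cond.
  apply: eq_bigr => j /andP[/andP[_ lt_jn] j_even].
  rewrite !rmorphM /= rmorphXn rmorphN1 IHn // pmulrn.
  have -> : uphalf n = ((n.+1 - j)./2 + j./2)%N by lia.
  by rewrite exprD -!mulrA mulrCA; congr (_ * _); rewrite mulrCA.
have := alt_odd_powsum_binomial n_even isT.
rewrite big_mkcond big_nat_recr // -big_mkcond n_even binn mul1r /=.
move=> /eqP; rewrite addr_eq0 => /eqP ->.
by rewrite mulrN opprK.
Qed.

Lemma alt_odd_powsum_fold t : ~~ odd t -> (0 < t)%N ->
  alt_odd_powsum t = 2%:R * (-1) ^+ p./2 * \sum_(1 <= j < (p./2).+1) (-1) ^+ j * (2 * j)%:R ^+ t.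
Proof.
move=> t_even t_gt0; set q := p./2; have p_eq : p = (2 * q).+1 by rewrite /q; lia.
set X := \sum_(1 <= j < q.+1) _.
have low : \sum_(0 <= m < q) (-1) ^+ m * (2 * m + 1)%:R ^+ t = (-1) ^+ q * X.
  rewrite big_nat_rev add0n /X big_add1 mulr_sumr; apply: eq_big_nat => j /andP[_ lt_jq].
  rewrite mulrA -exprD (@signr_odd_eq _ (q - j.+1) (q + j.+1)); last by lia.
  rewrite (natr_eq_opp_pchar pcharFp (b := (2 * j.+1)%N)) ?(exprN_even _ t_even) //.
  by have -> : (2 * (q - j.+1) + 1 + 2 * j.+1 = p)%N by lia.
have high : \sum_(q.+1 <= m < p) (-1) ^+ m * (2 * m + 1)%:R ^+ t = (-1) ^+ q * X.
  rewrite (big_addn 1 p q) (_ : p - q = q.+1)%N; last by lia.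
  rewrite /X mulr_sumr; apply: eq_big_nat => i _; rewrite mulrA -exprD addnC.
  rewrite (natr_eq_pchar pcharFp (b := (2 * i)%N)) //.
  by rewrite (_ : 2 * (q + i) + 1 = 2 * i + p)%N ?modnDr //; lia.
rewrite /alt_odd_powsum (big_cat_nat (n := q)) //=; last by lia.
rewrite [X in _ + X](big_cat_nat (n := q.+1)) //=; last by lia.
rewrite big_nat1 low high addn1 -p_eq (pcharf0 pcharFp) expr0n gtn_eqF // mulr0 add0r.
by rewrite -mulrA mulr_natl mulr2n.
Qed.

End OddCharacteristic.

Arguments alt_odd_powsum {F} p n.

Lemma sum_expr_finField (F : finFieldType) t :
  (0 < t < #|F|.-1)%N -> \sum_(x : F) x ^+ t = 0.
Proof.
case/andP=> t_gt0 t_lt.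
have [a a_neq0 at_neq1] : exists2 a : F, a != 0 & a ^+ t != 1.
  have /forallPn[a] : ~~ [forall a : F, (a != 0) ==> (a ^+ t == 1)].
    apply/negP => /forallP at1.
    have Xt_neq0 : 'X^t - 1 != 0 :> {poly F} by rewrite -size_poly_eq0 size_Xn_sub_1.
    have roots_Xt : all (root ('X^t - 1)) (enum (predC1 (0 : F))).
      apply/allP => x; rewrite mem_enum /= => x_neq0.
      by rewrite /root !hornerE subr_eq0 (implyP (at1 x)).
    have := max_poly_roots Xt_neq0 roots_Xt (enum_uniq _).
    by rewrite -cardE cardC1 size_Xn_sub_1 // ltnS leqNgt t_lt.
  by rewrite negb_imply => /andP[]; exists a.
have : \sum_(x : F) x ^+ t = a ^+ t * \sum_(x : F) x ^+ t.
  by rewrite [LHS](reindex_inj (mulfI a_neq0)) mulr_sumr; under eq_bigr do rewrite exprMn.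
move/eqP; rewrite -subr_eq0 -{1}[\sum_x _]mul1r -mulrBl mulf_eq0 subr_eq0 eq_sym.
by rewrite (negbTE at_neq1) => /eqP.
Qed.

Lemma sum_Fp_nat (R : nmodType) p (f : 'F_p -> R) :
  prime p -> \sum_(x : 'F_p) f x = \sum_(0 <= i < p) f i%:R.
Proof.
move=> p_pr; rewrite [X in index_iota 0 X](esym (Fp_cast p_pr)) big_mkord.
by apply: eq_bigr => i _; rewrite natr_Zp.
Qed.

Definition powsum {R : nzSemiRingType} (p t : nat) (P : pred nat) : R :=
  \sum_(0 <= u < p.+1 | P u) u%:R ^+ t.

Lemma powsum_partition {R : nzSemiRingType} {p t : nat} (C : pred nat) (As : seq (pred nat)) :
  (forall u, (u <= p)%N -> (C u : nat) = count (fun A : pred nat => A u) As) ->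
  powsum p t C = \sum_(A <- As) powsum (R := R) p t A.
Proof.
move=> countC; rewrite /powsum (exchange_big_dep xpredT) //= big_mkcond.
apply: eq_big_nat => u /andP[_ le_up].
by rewrite big_const_seq iter_addr_0 -countC // mulrb.
Qed.

Section Reflection.
Variables (R : comNzRingType) (p t : nat).
Hypotheses (pcharRp : p \in [pchar R]) (t_even : ~~ odd t).

Lemma powsum_bij c (P Q : pred nat) (h g : nat -> nat) :
  (forall s, (s <= p)%N -> P s ->
     [/\ (h s <= p)%N, Q (h s), g (h s) = s & (h s)%:R ^+ t = (c * s)%:R ^+ t :> R]) ->
  (forall u, (u <= p)%N -> Q u -> [/\ (g u <= p)%N, P (g u) & h (g u) = u]) ->
  c%:R ^+ t * powsum p t P = powsum (R := R) p t Q.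
Proof.
move=> hP gQ; rewrite /powsum mulr_sumr.
rewrite big_nat_cond (eq_bigr (fun s => (h s)%:R ^+ t)) -?big_nat_cond; last first.
  by move=> s /andP[/andP[_ le_sp] Ps]; case: (hP s) => // _ _ _ ->; rewrite natrM exprMn.
apply: (big_nat_bij (g := g) (fun u : nat => u%:R ^+ t)) => [s | u] /andP[_].
  by move=> le_sp Ps; have [le_hp Qh ghs _] := hP s le_sp Ps.
by move=> le_up Qu; have [le_gp Pg hgu] := gQ u le_up Qu.
Qed.

Lemma powsum_reflect_sub c m (P Q : pred nat) : (0 < c)%N ->
  (forall s, (s <= p)%N -> P s -> [/\ c * s <= m * p, m * p - c * s <= p & Q (m * p - c * s)])%N ->
  (forall u, (u <= p)%N -> Q u ->
     [/\ c * ((m * p - u) %/ c) + u = m * p, (m * p - u) %/ c <= p & P ((m * p - u) %/ c)])%N ->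
  c%:R ^+ t * powsum p t P = powsum (R := R) p t Q.
Proof.
move=> c_gt0 hP gQ.
apply: (powsum_bij (h := fun s => (m * p - c * s)%N) (g := fun u => ((m * p - u) %/ c)%N))
  => [s le_sp Ps|u le_up Qu].
  have [le_csmp le_hp Qh] := hP s le_sp Ps; split=> //; first by rewrite subKn // mulKn.
  rewrite (natr_eq_opp_pchar pcharRp (b := (c * s)%N)) ?exprN_even // subnK //.
  by rewrite dvdn_mull.
by have [eq_u le_gp Pg] := gQ u le_up Qu; split=> //; rewrite -{1}eq_u addKn.
Qed.

Lemma powsum_reflect_add c m (P Q : pred nat) : (0 < c)%N ->
  (forall s, (s <= p)%N -> P s -> [/\ m * p <= c * s, c * s - m * p <= p & Q (c * s - m * p)])%N ->
  (forall u, (u <= p)%N -> Q u ->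
     [/\ c * ((u + m * p) %/ c) = u + m * p, (u + m * p) %/ c <= p & P ((u + m * p) %/ c)])%N ->
  c%:R ^+ t * powsum p t P = powsum (R := R) p t Q.
Proof.
move=> c_gt0 hP gQ.
apply: (powsum_bij (h := fun s => (c * s - m * p)%N) (g := fun u => ((u + m * p) %/ c)%N))
  => [s le_sp Ps|u le_up Qu].
  have [le_mpcs le_hp Qh] := hP s le_sp Ps; split=> //; first by rewrite subnK // mulKn.
  by rewrite (natr_eq_pchar pcharRp (b := (c * s)%N)) // -[in RHS](subnK le_mpcs) addnC modnMDl.
by have [eq_u le_gp Pg] := gQ u le_up Qu; split=> //; rewrite eq_u addnK.
Qed.

End Reflection.

Arguments powsum_reflect_sub {R p t} pcharRp t_even c m {P} Q.
Arguments powsum_reflect_add {R p t} pcharRp c m {P} Q.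

Lemma fermat_Fp p (x : 'F_p) : prime p -> x != 0 -> x ^+ p.-1 = 1.
Proof.
move=> p_prime x_neq0; apply: (mulfI x_neq0).
by rewrite -exprS prednK ?prime_gt0 // mulr1 -[RHS](expf_card x) card_Fp.
Qed.

Definition band (p n r a b c d u : nat) : bool :=
  [&& u %% n == r, a * p < b * u & d * u < c * p]%N.

Notation quarter p := (band p 1 0 0 1 1 4).

Section PrimeField.
Variables (p t : nat).
Hypotheses (p_prime : prime p) (p_odd : odd p).
Hypotheses (t_even : ~~ odd t) (t_gt0 : (0 < t)%N) (t_lt : (t < p.-1)%N).

Lemma sum_half_powers : \sum_(1 <= j < (p./2).+1) (j%:R : 'F_p) ^+ t = 0.
Proof.
have := sum_expr_finField (F := 'F_p) (t := t); rewrite card_Fp // t_gt0 t_lt => /(_ isT).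
rewrite sum_Fp_nat // big_ltn ?prime_gt0 // expr0n gtn_eqF // add0r.
rewrite (big_cat_nat (n := (p./2).+1)) //=; last by lia.
rewrite -[X in _ + X = 0](big_nat_bij (h := fun j => (p - j)%N) (g := fun u => (p - u)%N)
          (P := xpredT) (m := 1) (n := (p./2).+1)) => [|s|u]; last 2 first.
- by move=> s_range _; split=> //; lia.
- by move=> u_range _; split=> //; lia.
rewrite [X in _ + X](eq_big_nat _ _ (F2 := fun j => (j%:R : 'F_p) ^+ t)) => [|j /andP[_ lt_jp]].
  move/eqP; rewrite -mulr2n -mulr_natl mulf_eq0 (negbTE (two_neq0 (pchar_Fp p_prime) p_odd)).
  by move/eqP.
rewrite (natr_eq_opp_pchar (pchar_Fp p_prime) (b := j)) ?(exprN_even _ t_even) //.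
by rewrite subnK //; lia.
Qed.

Lemma alt_sum_half_powers :
  \sum_(1 <= j < (p./2).+1) (-1) ^+ j * (j%:R : 'F_p) ^+ t
    = 2%:R * 2%:R ^+ t * powsum p t (quarter p).
Proof.
have sum_even : \sum_(1 <= j < (p./2).+1 | ~~ odd j) (j%:R : 'F_p) ^+ t
    = 2%:R ^+ t * powsum p t (quarter p).
  rewrite /powsum mulr_sumr.
  under [RHS]eq_bigr do rewrite -exprMn -natrM.
  apply: esym; apply: (big_nat_bij (h := fun u => (2 * u)%N) (g := fun j => j./2)).
    by move=> u u_range; rewrite /band => ?; split=> //; lia.
  by move=> j j_range ?; rewrite /band; split=> //; lia.
have := sum_half_powers; rewrite (bigID odd) /= => /eqP; rewrite addr_eq0 => /eqP sum_odd.
rewrite (bigID odd) /= (eq_bigr (fun j => - (j%:R ^+ t))) => [|j j_odd]; last first.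
  by rewrite -signr_odd j_odd mulN1r.
rewrite sumrN sum_odd opprK [X in _ + X](eq_bigr (fun j => j%:R ^+ t)) => [|j /negbTE j_even].
  by rewrite sum_even -mulr2n -mulrA mulr_natl.
by rewrite -signr_odd j_even mul1r.
Qed.

Lemma alt_odd_powsum_quarter :
  alt_odd_powsum p t = (-1) ^+ p./2 * 4%:R ^+ t.+1 * powsum p t (quarter p) :> 'F_p.
Proof.
rewrite (alt_odd_powsum_fold (pchar_Fp p_prime)) //.
under eq_bigr do rewrite natrM exprMn mulrCA.
rewrite -mulr_sumr alt_sum_half_powers exprS (natrM _ 2 2) exprMn !mulrA.
by rewrite [2%:R * (-1) ^+ _]mulrC [_ * 2%:R ^+ t * 2%:R]mulrAC.
Qed.

Lemma euler_quarter_powsum :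
  (euler t)%:~R = (-1) ^+ (t./2 + p./2) * 4%:R ^+ t.+1 * powsum p t (quarter p) :> 'F_p.
Proof.
by rewrite (euler_alt_odd_powsum (pchar_Fp p_prime)) // alt_odd_powsum_quarter !mulrA -exprD.
Qed.

End PrimeField.

Lemma euler_term_Fp p k : prime p -> odd p -> (0 < k)%N -> (k <= (p - 3)./2)%N ->
  ((-1) ^+ k * 4 ^+ (2 * k - 1) * euler (p - 1 - 2 * k))%:~R
    = powsum p (p - 1 - 2 * k) (quarter p) :> 'F_p.
Proof.
move=> p_prime p_odd k_gt0 k_le; set t := (p - 1 - 2 * k)%N.
have [t_even t_gt0 t_lt] : [/\ ~~ odd t, (0 < t)%N & (t < p.-1)%N] by rewrite /t; split; lia.
have four_neq0 : (4%:R : 'F_p) != 0.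
  by rewrite (natrM _ 2 2) mulf_neq0 // (two_neq0 (pchar_Fp p_prime) p_odd).
rewrite !rmorphM /= rmorphXn rmorphN1 rmorphXn rmorph_nat euler_quarter_powsum //.
rewrite mulrA mulrACA -!exprD (@signr_odd_eq _ _ 0) ?mul1r; last by lia.
by rewrite (_ : 2 * k - 1 + t.+1 = p.-1)%N ?fermat_Fp ?mul1r //; lia.
Qed.

Lemma Ssum_powsum (R : nzRingType) (p t a b c d : nat) (x y : rat) : (0 < b)%N -> (0 < d)%N ->
  x = a%:R / b%:R -> y = c%:R / d%:R ->
  (Ssum p t x y)%:~R = powsum (R := R) p t (band p 1 0 a b c d).
Proof.
move=> b_gt0 d_gt0 -> ->; rewrite /Ssum rmorph_sum /powsum; apply: eq_big => [s|s _].
  rewrite /band modn1 eqxx /= mulrAC ltr_pdivrMr ?ltr0n // mulrAC ltr_pdivlMr ?ltr0n //.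
  by rewrite -!natrM !ltr_nat [(s * b)%N]mulnC [(s * d)%N]mulnC.
by rewrite rmorphXn /= pmulrn.
Qed.

Arguments Ssum_powsum {R p t} a b c d {x y}.

(* The sets of u = |m p - c s| with x p < s < y p, one for each term c^t S_t(x,y) of
   the theorem, in the same order. *)
Definition quarter_pieces p : seq (pred nat) :=
  [:: band p 32 0 0 1 1 4; band p 6 (p %% 6) 1 8 1 4; band p 6 (6 - p %% 6) 1 8 1 4;
      band p 2 1 1 12 1 8; band p 4 2 1 6 1 4;
      band p 2 1 1 16 1 12; band p 4 2 1 8 1 6; band p 6 3 3 16 1 4;
      band p 2 1 1 24 1 16; band p 4 2 1 12 1 8; band p 6 3 1 8 3 16; band p 8 4 1 6 1 4;
      band p 2 1 1 32 1 24; band p 4 2 1 16 1 12; band p 8 4 1 8 1 6;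
      band p 2 1 1 64 1 32; band p 4 2 1 32 1 16; band p 8 4 1 16 1 8; band p 16 8 1 8 1 4;
      band p 2 1 0 1 1 64; band p 4 2 0 1 1 32; band p 8 4 0 1 1 16; band p 16 8 0 1 1 8;
      band p 32 16 0 1 1 4].

Lemma count_perm_nth (T : Type) (x0 : T) (a : pred T) (s : seq T) (idx : seq nat) :
  perm_eq idx (iota 0 (size s)) -> count a [seq nth x0 s i | i <- idx] = count a s.
Proof.
by move=> /permP eq_idx; rewrite count_map eq_idx -count_map -[in RHS](mkseq_nth x0 s).
Qed.

Tactic Notation "split_band" constr(E) := rewrite (_ : E); last by rewrite /band; lia.

Section QuarterPartition.
Variables (p u : nat).
Hypotheses (p_odd : odd p) (p_ndvd3 : ~~ (3 %| p)%N).

Lemma band_quarter_classes : (quarter p u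
  = band p 2 1 0 1 1 4 u + band p 4 2 0 1 1 4 u + band p 8 4 0 1 1 4 u
    + band p 16 8 0 1 1 4 u + band p 32 16 0 1 1 4 u + band p 32 0 0 1 1 4 u :> nat)%N.
Proof.
split_band (quarter p u
  = band p 2 1 0 1 1 4 u + band p 4 2 0 1 1 4 u + band p 4 0 0 1 1 4 u :> nat)%N.
split_band (band p 4 0 0 1 1 4 u
  = band p 8 4 0 1 1 4 u + band p 16 8 0 1 1 4 u + band p 16 0 0 1 1 4 u :> nat)%N.
split_band (band p 16 0 0 1 1 4 u = band p 32 16 0 1 1 4 u + band p 32 0 0 1 1 4 u :> nat)%N.
by rewrite !addnA.
Qed.

Lemma band_odd_pieces : (band p 2 1 0 1 1 4 u
  = band p 2 1 0 1 1 64 u + band p 2 1 1 64 1 32 u + band p 2 1 1 32 1 24 u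
    + band p 2 1 1 24 1 16 u + band p 2 1 1 16 1 12 u + band p 2 1 1 12 1 8 u
    + band p 6 (p %% 6) 1 8 1 4 u + band p 6 (6 - p %% 6) 1 8 1 4 u
    + band p 6 3 1 8 3 16 u + band p 6 3 3 16 1 4 u :> nat)%N.
Proof.
split_band (band p 2 1 0 1 1 4 u
  = band p 2 1 0 1 1 32 u + band p 2 1 1 32 1 8 u + band p 2 1 1 8 1 4 u :> nat)%N.
split_band (band p 2 1 0 1 1 32 u = band p 2 1 0 1 1 64 u + band p 2 1 1 64 1 32 u :> nat)%N.
split_band (band p 2 1 1 32 1 8 u = band p 2 1 1 32 1 16 u + band p 2 1 1 16 1 8 u :> nat)%N.
split_band (band p 2 1 1 32 1 16 u = band p 2 1 1 32 1 24 u + band p 2 1 1 24 1 16 u :> nat)%N.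
split_band (band p 2 1 1 16 1 8 u = band p 2 1 1 16 1 12 u + band p 2 1 1 12 1 8 u :> nat)%N.
have [->|->] : (p %% 6 = 1 \/ p %% 6 = 5)%N by lia.
- split_band (band p 2 1 1 8 1 4 u
    = band p 6 1 1 8 1 4 u + band p 6 5 1 8 1 4 u + band p 6 3 1 8 1 4 u :> nat)%N.
  split_band (band p 6 3 1 8 1 4 u = band p 6 3 1 8 3 16 u + band p 6 3 3 16 1 4 u :> nat)%N.
  by rewrite !addnA.
- split_band (band p 2 1 1 8 1 4 u
    = band p 6 5 1 8 1 4 u + band p 6 1 1 8 1 4 u + band p 6 3 1 8 1 4 u :> nat)%N.
  split_band (band p 6 3 1 8 1 4 u = band p 6 3 1 8 3 16 u + band p 6 3 3 16 1 4 u :> nat)%N.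
  by rewrite !addnA.
Qed.

Lemma band_twice_odd_pieces : (band p 4 2 0 1 1 4 u
  = band p 4 2 0 1 1 32 u + band p 4 2 1 32 1 16 u + band p 4 2 1 16 1 12 u
    + band p 4 2 1 12 1 8 u + band p 4 2 1 8 1 6 u + band p 4 2 1 6 1 4 u :> nat)%N.
Proof.
split_band (band p 4 2 0 1 1 4 u
  = band p 4 2 0 1 1 16 u + band p 4 2 1 16 1 8 u + band p 4 2 1 8 1 4 u :> nat)%N.
split_band (band p 4 2 0 1 1 16 u = band p 4 2 0 1 1 32 u + band p 4 2 1 32 1 16 u :> nat)%N.
split_band (band p 4 2 1 16 1 8 u = band p 4 2 1 16 1 12 u + band p 4 2 1 12 1 8 u :> nat)%N.
split_band (band p 4 2 1 8 1 4 u = band p 4 2 1 8 1 6 u + band p 4 2 1 6 1 4 u :> nat)%N.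
by rewrite !addnA.
Qed.

Lemma band_four_odd_pieces : (band p 8 4 0 1 1 4 u
  = band p 8 4 0 1 1 16 u + band p 8 4 1 16 1 8 u + band p 8 4 1 8 1 6 u
    + band p 8 4 1 6 1 4 u :> nat)%N.
Proof.
split_band (band p 8 4 0 1 1 4 u = band p 8 4 0 1 1 8 u + band p 8 4 1 8 1 4 u :> nat)%N.
split_band (band p 8 4 0 1 1 8 u = band p 8 4 0 1 1 16 u + band p 8 4 1 16 1 8 u :> nat)%N.
split_band (band p 8 4 1 8 1 4 u = band p 8 4 1 8 1 6 u + band p 8 4 1 6 1 4 u :> nat)%N.
by rewrite !addnA.
Qed.

Lemma band_eight_odd_pieces :
  (band p 16 8 0 1 1 4 u = band p 16 8 0 1 1 8 u + band p 16 8 1 8 1 4 u :> nat)%N.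
Proof. by rewrite /band; lia. Qed.

Lemma count_quarter_pieces :
  quarter p u = count (fun A : pred nat => A u) (quarter_pieces p) :> nat.
Proof.
rewrite band_quarter_classes band_odd_pieces band_twice_odd_pieces.
rewrite band_four_odd_pieces band_eight_odd_pieces.
(* The pieces in the order in which the class lemmas list them. *)
rewrite -(count_perm_nth xpred0 _ (idx := [:: 19; 15; 12; 8; 5; 3; 1; 2; 10; 7;
  20; 16; 13; 9; 6; 4; 21; 17; 14; 11; 22; 18; 23; 0])) //=.
by rewrite !addnA addn0.
Qed.

End QuarterPartition.

Ltac band_arith := move=> ? ?; rewrite /band => ?; split; lia.
Tactic Notation "reflect_band" open_constr(L) := rewrite L //; [|band_arith|band_arith].

Section CombinationFp.
Variables (p t : nat).
Hypotheses (p_prime : prime p) (p_odd : odd p) (t_even : ~~ odd t).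
Let pcharFp : p \in [pchar 'F_p] := pchar_Fp p_prime.
Local Notation reflect_sub := (powsum_reflect_sub pcharFp t_even).
Local Notation reflect_add := (powsum_reflect_add (t := t) pcharFp).

Lemma Ssum_combination_Fp :
  ((32 ^+ t * Ssum p t 0%R (1 / 128)%R
    + 6 ^+ t * Ssum p t (1 / 8)%R (7 / 48)%R
    + 6 ^+ t * Ssum p t (3 / 16)%R (5 / 24)%R
    + (2 ^+ t + 4 ^+ t) * Ssum p t (7 / 16)%R (11 / 24)%R
    + (2 ^+ t + 4 ^+ t + 6 ^+ t) * Ssum p t (11 / 24)%R (15 / 32)%R
    + (2 ^+ t + 4 ^+ t + 6 ^+ t + 8 ^+ t) * Ssum p t (15 / 32)%R (23 / 48)%R
    + (2 ^+ t + 4 ^+ t + 8 ^+ t) * Ssum p t (23 / 48)%R (31 / 64)%R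
    + (2 ^+ t + 4 ^+ t + 8 ^+ t + 16 ^+ t) * Ssum p t (31 / 64)%R (63 / 128)%R
    + (2 ^+ t + 4 ^+ t + 8 ^+ t + 16 ^+ t + 32 ^+ t) * Ssum p t (63 / 128)%R (1 / 2)%R)%:~R : 'F_p)
  = \sum_(A <- quarter_pieces p) powsum p t A.
Proof.
rewrite !rmorphD !rmorphM !rmorphD !rmorphXn !rmorph_nat /=.
rewrite (Ssum_powsum 0 1 1 128) ?mul0r // (Ssum_powsum 1 8 7 48) // (Ssum_powsum 3 16 5 24) //.
rewrite (Ssum_powsum 7 16 11 24) // (Ssum_powsum 11 24 15 32) // (Ssum_powsum 15 32 23 48) //.
rewrite (Ssum_powsum 23 48 31 64) // (Ssum_powsum 31 64 63 128) // (Ssum_powsum 63 128 1 2) //.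
rewrite !mulrDl.
reflect_band (reflect_add 32 0 (band p 32 0 0 1 1 4)).
reflect_band (reflect_sub 6 1 (band p 6 (p %% 6) 1 8 1 4)).
reflect_band (reflect_add 6 1 (band p 6 (6 - p %% 6) 1 8 1 4)).
reflect_band (reflect_sub 6 3 (band p 6 3 3 16 1 4)).
reflect_band (reflect_sub 6 3 (band p 6 3 1 8 3 16)).
reflect_band (reflect_sub 2 1 (band p 2 1 1 12 1 8)).
reflect_band (reflect_sub 2 1 (band p 2 1 1 16 1 12)).
reflect_band (reflect_sub 2 1 (band p 2 1 1 24 1 16)).
reflect_band (reflect_sub 2 1 (band p 2 1 1 32 1 24)).
reflect_band (reflect_sub 2 1 (band p 2 1 1 64 1 32)).
reflect_band (reflect_sub 2 1 (band p 2 1 0 1 1 64)).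
reflect_band (reflect_sub 4 2 (band p 4 2 1 6 1 4)).
reflect_band (reflect_sub 4 2 (band p 4 2 1 8 1 6)).
reflect_band (reflect_sub 4 2 (band p 4 2 1 12 1 8)).
reflect_band (reflect_sub 4 2 (band p 4 2 1 16 1 12)).
reflect_band (reflect_sub 4 2 (band p 4 2 1 32 1 16)).
reflect_band (reflect_sub 4 2 (band p 4 2 0 1 1 32)).
reflect_band (reflect_sub 8 4 (band p 8 4 1 6 1 4)).
reflect_band (reflect_sub 8 4 (band p 8 4 1 8 1 6)).
reflect_band (reflect_sub 8 4 (band p 8 4 1 16 1 8)).
reflect_band (reflect_sub 8 4 (band p 8 4 0 1 1 16)).
reflect_band (reflect_sub 16 8 (band p 16 8 1 8 1 4)).
reflect_band (reflect_sub 16 8 (band p 16 8 0 1 1 8)).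
reflect_band (reflect_sub 32 16 (band p 32 16 0 1 1 4)).
by rewrite !big_cons big_nil addr0 !addrA.
Qed.

End CombinationFp.

Theorem mainTheorem7 (p k : nat) :
  prime p -> (5 <= p)%N -> (1 <= k)%N -> (k <= (p - 3)./2)%N ->
  let t := (p - 1 - 2 * k)%N in
  let S := Ssum p t in
  ((p%:Z) %| ((-1) ^+ k * 4 ^+ (2 * k - 1) * euler t
     - ( 32 ^+ t * S 0%R (1 / 128)%R
       + 6 ^+ t * S (1 / 8)%R (7 / 48)%R
       + 6 ^+ t * S (3 / 16)%R (5 / 24)%R
       + (2 ^+ t + 4 ^+ t) * S (7 / 16)%R (11 / 24)%R
       + (2 ^+ t + 4 ^+ t + 6 ^+ t) * S (11 / 24)%R (15 / 32)%R
       + (2 ^+ t + 4 ^+ t + 6 ^+ t + 8 ^+ t) * S (15 / 32)%R (23 / 48)%R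
       + (2 ^+ t + 4 ^+ t + 8 ^+ t) * S (23 / 48)%R (31 / 64)%R
       + (2 ^+ t + 4 ^+ t + 8 ^+ t + 16 ^+ t) * S (31 / 64)%R (63 / 128)%R
       + (2 ^+ t + 4 ^+ t + 8 ^+ t + 16 ^+ t + 32 ^+ t) * S (63 / 128)%R (1 / 2)%R)))%Z.
Proof.
move=> p_prime p_ge5 k_gt0 k_le; cbv zeta; set t := (p - 1 - 2 * k)%N.
have p_odd : odd p by case: (even_prime p_prime) p_ge5 => [->|].
have p_ndvd3 : ~~ (3 %| p)%N by rewrite (dvdn_prime2 (isT : prime 3) p_prime); lia.
have t_even : ~~ odd t by rewrite /t; lia.
rewrite (dvdz_pcharf (pchar_Fp p_prime)) rmorphB /= subr_eq0.
rewrite euler_term_Fp // Ssum_combination_Fp //.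
by rewrite (powsum_partition (fun u _ => count_quarter_pieces u p_odd p_ndvd3)).
Qed.
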